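(* Let $(N,+,* )$ be a nilpotent ring with adjoint operation $x\circ y=x+y+x*y$, let $S$ be a subring and $I$ a two-sided ideal of $N$ with $S\cap I=\{0\}$ and $N=S+I$. Then every $x\in N$ can be written uniquely as $x=s\circ i$ with $s\in S$, $i\in I$; define $x\bullet y=s\circ y\circ i$, so that $(N,+,\bullet)$ is a left brace, and let $r$ be its Yang–Baxter map. Let $X\subseteq N$ be such that $(X,r)$ is a solution of the set-theoretic Yang–Baxter equation, and let $J\subseteq I\cap X$ be a two-sided ideal of the ring $N$. Let $g:X\to X$ satisfy, for every $x\in X$: $g(x)*z=z*g(x)$ for all $z\in I$; $g(x+j)=g(x)$ whenever $j\in J$ and $x+j\in X$; $g(x)\in J$; and $g(x)\circ g(x)=0$. Suppose $k(x)=x+x*g(x)$ satisfies $k(X)\subseteq X$. Then $k$ is a reflection of $(X,r)$ and $k\circ k=\mathrm{id}_X$.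
   Context: A (left) brace is a triple $(B,+,\circ)$ with $(B,+)$ abelian group, $(B,\circ)$ group, and $x\circ(y+z)=x\circ y+x\circ z-x$. The Yang–Baxter map of the brace $(N,+,\bullet)$ is $r(x,y)=(\sigma_x(y),\tau_y(x))$ with $\sigma_x(y)=x\bullet y-x$ and $\tau_y(x)=(\sigma_x(y))^{-1}\bullet x-(\sigma_x(y))^{-1}$, inverses taken in $(N,\bullet)$. For $X\subseteq N$, $(X,r)$ is a solution of the set-theoretic Yang–Baxter equation if $r(X\times X)\subseteq X\times X$ and $(\mathrm{id}\times r)(r\times\mathrm{id})(\mathrm{id}\times r)=(r\times\mathrm{id})(\mathrm{id}\times r)(r\times\mathrm{id})$ on $X^3$. A map $k:X\to X$ is a reflection of $(X,r)$ if $r(\mathrm{id}\times k)r(\mathrm{id}\times k)=(\mathrm{id}\times k)r(\mathrm{id}\times k)r$ on $X\times X$. *)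

(* (N,+) is a zmodType; the (non-unital) multiplication is an
   explicit operation, since MathComp rings are unital and a nilpotent ring is not. *)
From mathcomp Require Import all_boot all_order all_algebra.
From Stdlib Require Import ClassicalEpsilon.
Set Implicit Arguments. Unset Strict Implicit. Unset Printing Implicit Defensive.
Import GRing.Theory.
Local Open Scope ring_scope.

Section Defs.
Variable N : zmodType.
Variable mul : N -> N -> N.

Definition is_nilpotent_ring : Prop :=
  [/\ forall x y z, mul x (mul y z) = mul (mul x y) z,
      forall x y z, mul x (y + z) = mul x y + mul x z,
      forall x y z, mul (x + y) z = mul x z + mul y z &
      exists n : nat, forall (x : N) (s : seq N), size s = n -> foldl mul x s = 0].

Definition adj (x y : N) : N := x + y + mul x y.

Definition is_subring (S : N -> Prop) : Prop :=
  [/\ S 0, forall x y, S x -> S y -> S (x - y) & forall x y, S x -> S y -> S (mul x y)].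

Definition is_ideal (I : N -> Prop) : Prop :=
  [/\ I 0, forall x y, I x -> I y -> I (x - y),
      forall x y, I y -> I (mul x y) & forall x y, I x -> I (mul x y)].

Variables S I : N -> Prop.

(* a chosen decomposition x = s o i with s in S, i in I (unique under the
   hypotheses of the theorem) *)
Definition decomp (x : N) : N * N :=
  epsilon (inhabits (0, 0)) (fun p => S p.1 /\ I p.2 /\ x = adj p.1 p.2).

Definition bullet (x y : N) : N := adj (adj (decomp x).1 y) (decomp x).2.

Definition binv (x : N) : N :=
  epsilon (inhabits 0) (fun y => bullet x y = 0 /\ bullet y x = 0).

Definition sigma (x y : N) : N := bullet x y - x.
Definition tau (y x : N) : N := bullet (binv (sigma x y)) x - binv (sigma x y).

Definition ybr (p : N * N) : N * N := (sigma p.1 p.2, tau p.2 p.1).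
End Defs.

Definition is_left_brace (B : zmodType) (op : B -> B -> B) : Prop :=
  [/\ forall x y z, op x (op y z) = op (op x y) z,
      exists e, (forall x, op e x = x /\ op x e = x) /\
                (forall x, exists y, op x y = e /\ op y x = e) &
      forall x y z, op x (y + z) = op x y + op x z - x].

Definition r12 (T : Type) (r : T * T -> T * T) (t : T * T * T) : T * T * T :=
  let '(x, y, z) := t in let '(a, b) := r (x, y) in (a, b, z).
Definition r23 (T : Type) (r : T * T -> T * T) (t : T * T * T) : T * T * T :=
  let '(x, y, z) := t in let '(b, c) := r (y, z) in (x, b, c).

Definition is_YB_solution (T : Type) (X : T -> Prop) (r : T * T -> T * T) : Prop :=
  (forall x y, X x -> X y -> X (r (x, y)).1 /\ X (r (x, y)).2) /\
  (forall x y z, X x -> X y -> X z ->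
     r23 r (r12 r (r23 r (x, y, z))) = r12 r (r23 r (r12 r (x, y, z)))).

Definition is_reflection (T : Type) (X : T -> Prop) (r : T * T -> T * T) (k : T -> T) : Prop :=
  let idk := fun p : T * T => (p.1, k p.2) in
  forall x y, X x -> X y ->
    r (idk (r (idk (x, y)))) = idk (r (idk (r (x, y)))).

From Pilot Require Import Defs.
From mathcomp Require Import all_boot all_order all_algebra.
From Stdlib Require Import ClassicalEpsilon.
Set Implicit Arguments. Unset Strict Implicit. Unset Printing Implicit Defensive.
Import GRing.Theory.
Local Open Scope ring_scope.

(* Write sigma_c y = c • y - c for the lambda-action of (N, •) on (N, +).
   Since g(x) lies in I, k(x) = sigma_(g x) x, and since g(x) commutes with
   I, sigma_(g x) commutes with every sigma_c.  Both sides of the reflection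
   equation are then words in such maps, and they agree once the arguments at
   which g is evaluated are shown to agree modulo J: J is stable under every
   sigma_c, and changing c modulo J changes sigma_c, the •-inverse of c, and
   hence sigma_(c^-1), only modulo J.  Finally g(k x) = g x because
   k x - x = x g(x) is in J, so k (k x) = x + x (g x ∘ g x) = x. *)

(* Identities of abelian groups: move everything to the left and cancel each
   summand against its opposite. *)
Ltac cancel_head :=
  match goal with
  | |- 0 + _ = 0 => rewrite add0r
  | |- - ?t + _ = 0 => do 40? rewrite (addrCA _ t); first [rewrite addKr | rewrite addNKr]
  | |- ?t + _ = 0 => do 40? rewrite (addrCA _ (- t)); first [rewrite addKr | rewrite addNKr]
  end.

Ltac zmod_eq :=
  apply/eqP; rewrite -subr_eq0; apply/eqP;
  rewrite ?opprD ?opprB ?opprK ?oppr0 ?addr0 ?add0r ?subr0 ?sub0r;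
  rewrite -[LHS]addr0 -?addrA; repeat cancel_head; reflexivity.

Lemma eq_from_diff (V : zmodType) (a b c d : V) : c = d -> a - b = c - d -> a = b.
Proof. by move=> -> /eqP; rewrite subrr subr_eq0 => /eqP. Qed.

Section Subrings.
Variables (N : zmodType) (mul : N -> N -> N) (P : N -> Prop).

Lemma ideal_subring : is_ideal mul P -> is_subring mul P.
Proof. by case=> P0 PB _ PMr; split=> // x y Px _; apply: PMr. Qed.

Lemma idealMl (idP : is_ideal mul P) x y : P y -> P (mul x y).
Proof. by case: idP => _ _ PMl _; apply: PMl. Qed.

Lemma idealMr (idP : is_ideal mul P) x y : P x -> P (mul x y).
Proof. by case: idP => _ _ _ PMr; apply: PMr. Qed.

Hypothesis subP : is_subring mul P.

Lemma subring0 : P 0. Proof. by case: subP. Qed.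

Lemma subringB x y : P x -> P y -> P (x - y).
Proof. by case: subP => _ PB _; apply: PB. Qed.

Lemma subringM x y : P x -> P y -> P (mul x y).
Proof. by case: subP => _ _ PM; apply: PM. Qed.

Lemma subringN x : P x -> P (- x).
Proof. by move=> Px; rewrite -sub0r; apply: subringB => //; apply: subring0. Qed.

Lemma subringD x y : P x -> P y -> P (x + y).
Proof. by move=> Px Py; rewrite -[y]opprK; apply: subringB => //; apply: subringN. Qed.

Lemma subring_adj x y : P x -> P y -> P (adj mul x y).
Proof. by move=> Px Py; apply: subringD; [apply: subringD | apply: subringM]. Qed.

End Subrings.

Section NonUnitalRing.
Variables (N : zmodType) (mul : N -> N -> N).
Hypothesis mulA : forall x y z, mul x (mul y z) = mul (mul x y) z.
Hypothesis mulDr : forall x y z, mul x (y + z) = mul x y + mul x z.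
Hypothesis mulDl : forall x y z, mul (x + y) z = mul x z + mul y z.

Local Notation adj := (adj mul).

Lemma mulx0 x : mul x 0 = 0.
Proof. by apply: (@addrI _ (mul x 0)); rewrite -mulDr !addr0. Qed.

Lemma mul0x x : mul 0 x = 0.
Proof. by apply: (@addrI _ (mul 0 x)); rewrite -mulDl !addr0. Qed.

Lemma mulxN x y : mul x (- y) = - mul x y.
Proof. by apply/eqP; rewrite -addr_eq0 -mulDr addNr mulx0. Qed.

Lemma mulNx x y : mul (- x) y = - mul x y.
Proof. by apply/eqP; rewrite -addr_eq0 -mulDl addNr mul0x. Qed.

Ltac expand_mul :=
  rewrite /Defs.adj ?mulDr ?mulDl ?mulxN ?mulNx ?mulA.

Lemma adjA x y z : adj (adj x y) z = adj x (adj y z).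
Proof. by expand_mul; zmod_eq. Qed.

Lemma adj0x x : adj 0 x = x.
Proof. by rewrite /Defs.adj mul0x add0r addr0. Qed.

Lemma adjx0 x : adj x 0 = x.
Proof. by rewrite /Defs.adj mulx0 !addr0. Qed.

Hypothesis nilp : exists n : nat, forall (x : N) (s : seq N), size s = n -> foldl mul x s = 0.

(* The left inverse is the finite geometric series [- x + x^2 - x^3 + ...]. *)
Lemma adj_linv_in P x : is_subring mul P -> P x -> exists2 y, P y & adj y x = 0.
Proof.
move=> subP Px; have [n nil_n] := nilp.
pose y m := iter m (fun t => - x - mul t x) 0.
exists (y n).
  elim: n {nil_n} => [|m IH] /=; first exact: subring0 subP.
  by apply: (subringB subP) => //; [apply: (subringN subP) | apply: (subringM subP)].
suff -> : forall m, adj (y m) x = foldl mul x (nseq m (- x)).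
  by rewrite nil_n ?size_nseq.
elim=> [|m IH]; first by rewrite adj0x.
have -> : adj (y m.+1) x = mul (adj (y m) x) (- x) by expand_mul; zmod_eq.
by rewrite IH -addn1 nseqD foldl_cat.
Qed.

Lemma adj_linv x : exists y, adj y x = 0.
Proof.
have subT : is_subring mul (fun _ => True) by [].
by have [y _] := adj_linv_in subT (x := x) I; exists y.
Qed.

Lemma adj_rinv_of_linv x y : adj y x = 0 -> adj x y = 0.
Proof.
move=> yx; have [z zy] := adj_linv y.
suff -> : x = z by [].
by rewrite -[x]adj0x -zy adjA yx adjx0.
Qed.

Lemma adjI a b c : adj a b = adj a c -> b = c.
Proof.
move=> ab_ac; have [a' a'a] := adj_linv a.
by rewrite -[b]adj0x -a'a adjA ab_ac -adjA a'a adj0x.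
Qed.

Section Brace.
Variables S I : N -> Prop.
Hypothesis HS : is_subring mul S.
Hypothesis HI : is_ideal mul I.
Hypothesis HSI : forall x, S x -> I x -> x = 0.
Hypothesis HSplusI : forall x, exists s i, S s /\ I i /\ x = s + i.

Local Notation decomp := (decomp mul S I).
Local Notation bullet := (bullet mul S I).
Local Notation binv := (binv mul S I).
Local Notation sigma := (sigma mul S I).

Let HIsub : is_subring mul I := ideal_subring HI.

Definition is_decomp x (p : N * N) := S p.1 /\ I p.2 /\ x = adj p.1 p.2.

Lemma is_decomp_adj s i : S s -> I i -> is_decomp (adj s i) (s, i).
Proof. by []. Qed.

Lemma is_decomp_uniq x p q : is_decomp x p -> is_decomp x q -> p = q.
Proof.
case: p q => [s i] [s' i'] [/= Ss [Ii ->]] [/= Ss' [Ii' ss']].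
have diff_s : s - s' = (i' + mul s' i') - (i + mul s i).
  by apply: (eq_from_diff ss'); rewrite /Defs.adj; zmod_eq.
have /eqP : s - s' = 0.
  apply: HSI; first exact: (subringB HS).
  rewrite diff_s; apply: (subringB HIsub);
    by apply: (subringD HIsub) => //; apply: (idealMl HI).
by rewrite subr_eq0 => /eqP eq_s; rewrite -eq_s in ss' *; rewrite (adjI ss').
Qed.

Lemma is_decomp_exists x : exists p, is_decomp x p.
Proof.
have [s [i [Ss [Ii ->]]]] := HSplusI x.
have [s' s's] := adj_linv s.
have ss' := adj_rinv_of_linv s's.
exists (s, i + mul s' i); split=> //; split.
  by apply: (subringD HIsub) => //; apply: (idealMl HI).
apply: (eq_from_diff (esym (congr1 (mul^~ i) ss'))).
by rewrite /= /Defs.adj mul0x ?mulDr ?mulDl ?mulA; zmod_eq.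
Qed.

Lemma decomp_exists_unique x : exists! p, is_decomp x p.
Proof.
have [p px] := is_decomp_exists x.
by exists p; split=> // q; apply: is_decomp_uniq.
Qed.

Lemma decompP x : is_decomp x (decomp x).
Proof. exact: epsilon_spec (is_decomp_exists x). Qed.

Lemma decompE x p : is_decomp x p -> decomp x = p.
Proof. exact: is_decomp_uniq (decompP x). Qed.

Lemma bulletE x s i y : is_decomp x (s, i) -> bullet x y = adj (adj s y) i.
Proof. by move=> /decompE; rewrite /Defs.bullet => ->. Qed.

Lemma bulletA x y z : bullet x (bullet y z) = bullet (bullet x y) z.
Proof.
have [[s i] dx] := is_decomp_exists x; have [[t j] dy] := is_decomp_exists y.
have [/= Ss [Ii _]] := dx; have [/= St [Ij ey]] := dy.
have dxy : is_decomp (adj (adj s (adj t j)) i) (adj s t, adj j i).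
  rewrite /is_decomp /= !adjA.
  by split; [apply: (subring_adj HS) | split; [apply: (subring_adj HIsub) |]].
by rewrite (bulletE _ dy) !(bulletE _ dx) ey (bulletE _ dxy) !adjA.
Qed.

Lemma bullet0x y : bullet 0 y = y.
Proof.
have d0 : is_decomp 0 (0, 0).
  by split; [exact: subring0 HS | split; [exact: subring0 HIsub | rewrite adjx0]].
by rewrite (bulletE _ d0) adj0x adjx0.
Qed.

Lemma bulletx0 x : bullet x 0 = x.
Proof.
have [[s i] dx] := is_decomp_exists x.
by rewrite (bulletE _ dx) adjx0; case: dx => _ [_ ->].
Qed.

Lemma bulletD x y z : bullet x (y + z) = bullet x y + bullet x z - x.
Proof.
have [[s i] dx] := is_decomp_exists x; rewrite !(bulletE _ dx).
by case: dx => _ [_ ->]; expand_mul; zmod_eq.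
Qed.

Lemma bullet_inv_exists x : exists y, bullet x y = 0 /\ bullet y x = 0.
Proof.
have [[s i] dx] := is_decomp_exists x; have [/= Ss [Ii ex]] := dx.
have [s' Ss' s's] := adj_linv_in HS Ss; have [i' Ii' i'i] := adj_linv_in HIsub Ii.
exists (adj s' i'); rewrite (bulletE _ dx) (bulletE _ (is_decomp_adj Ss' Ii')) ex.
split; first by rewrite -adjA (adj_rinv_of_linv s's) adj0x.
by rewrite -(adjA s') s's adj0x (adj_rinv_of_linv i'i).
Qed.

Lemma bullet_left_brace : is_left_brace bullet.
Proof.
split; [exact: bulletA | exists 0 | exact: bulletD].
by split=> [x|]; [rewrite bullet0x bulletx0 | exact: bullet_inv_exists].
Qed.

Lemma binvP x : bullet x (binv x) = 0 /\ bullet (binv x) x = 0.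
Proof. exact: epsilon_spec (bullet_inv_exists x). Qed.

Lemma binv_uniq x y : bullet x y = 0 -> binv x = y.
Proof. by move=> xy; rewrite -[binv x]bulletx0 -xy bulletA (binvP x).2 bullet0x. Qed.

Lemma tauE y x : tau mul S I y x = sigma (binv (sigma x y)) x.
Proof. by []. Qed.

Lemma bullet_sigma c y : bullet c y = c + sigma c y.
Proof. by rewrite /Defs.sigma addrC subrK. Qed.

Lemma sigmaD c y z : sigma c (y + z) = sigma c y + sigma c z.
Proof. by rewrite /Defs.sigma bulletD; zmod_eq. Qed.

Lemma sigmaB c y z : sigma c (y - z) = sigma c y - sigma c z.
Proof. by have := sigmaD c (y - z) z; rewrite subrK => ->; rewrite addrK. Qed.

Lemma sigmaM a b y : sigma (bullet a b) y = sigma a (sigma b y).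
Proof. by rewrite [sigma b y]/Defs.sigma sigmaB /Defs.sigma bulletA; zmod_eq. Qed.

Lemma sigma0x y : sigma 0 y = y.
Proof. by rewrite /Defs.sigma bullet0x subr0. Qed.

Lemma sigma_binvK c y : sigma c (sigma (binv c) y) = y.
Proof. by rewrite -sigmaM (binvP c).1 sigma0x. Qed.

Lemma sigma_binvKV c y : sigma (binv c) (sigma c y) = y.
Proof. by rewrite -sigmaM (binvP c).2 sigma0x. Qed.

Lemma bullet_ideal_l h y : I h -> bullet h y = adj y h.
Proof.
move=> Ih; have dh : is_decomp h (0, h).
  by split; [exact: subring0 HS | split; [|rewrite adj0x]].
by rewrite (bulletE _ dh) adj0x.
Qed.

Lemma sigma_idealE h y : I h -> sigma h y = y + mul y h.
Proof. by move=> Ih; rewrite /Defs.sigma bullet_ideal_l // /Defs.adj; zmod_eq. Qed.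

Definition central_in_I h := I h /\ forall z, I z -> mul h z = mul z h.

Lemma bullet_central_r u h : central_in_I h -> bullet u h = adj u h.
Proof.
case=> Ih hI; have [[s i] dx] := is_decomp_exists u; rewrite (bulletE _ dx).
have [/= _ [Ii ->]] := dx; rewrite !adjA; congr (adj s _).
by rewrite /Defs.adj hI //; zmod_eq.
Qed.

Lemma sigma_central_comm h c y :
  central_in_I h -> sigma h (sigma c y) = sigma c (sigma h y).
Proof.
move=> hc; rewrite -!sigmaM; congr (sigma _ y).
by rewrite bullet_ideal_l ?bullet_central_r //; case: hc.
Qed.

Lemma sigma_central_conj h c y :
  central_in_I h -> sigma c (sigma h (sigma (binv c) y)) = sigma h y.
Proof. by move=> hc; rewrite -sigma_central_comm // sigma_binvK. Qed.

Section IdealInI.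
Variable J : N -> Prop.
Hypothesis HJ : is_ideal mul J.
Hypothesis HJI : forall j, J j -> I j.

Let HJsub : is_subring mul J := ideal_subring HJ.

Lemma sigma_ideal_stable c j : J j -> J (sigma c j).
Proof.
move=> Jj; have [[s i] dc] := is_decomp_exists c.
rewrite /Defs.sigma (bulletE _ dc); have [_ [_ ->]] := dc.
have -> : adj (adj s j) i - adj s i = j + mul s j + mul j i + mul (mul s j) i.
  by expand_mul; zmod_eq.
have Jsj := idealMl HJ s Jj.
by do !apply: (subringD HJsub) => //; apply: (idealMr HJ).
Qed.

Lemma bullet_sigma_diff c c' : c' = bullet c (sigma (binv c) (c' - c)).
Proof. by rewrite bullet_sigma sigma_binvK addrC subrK. Qed.

Lemma sigma_congr_modJ c c' y : J (c' - c) -> J (sigma c' y - sigma c y).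
Proof.
move=> Jc; have Jj := sigma_ideal_stable (binv c) Jc.
rewrite [in sigma c' y](bullet_sigma_diff c c') sigmaM (sigma_idealE _ (HJI Jj)).
by rewrite sigmaD addrAC subrr add0r; apply/sigma_ideal_stable/(idealMl HJ).
Qed.

Lemma binv_congr_modJ c c' : J (c' - c) -> J (binv c' - binv c).
Proof.
move=> Jc; have Jj := sigma_ideal_stable (binv c) Jc.
have [w Jw wj] := adj_linv_in HJsub Jj.
have -> : binv c' = bullet w (binv c).
  apply: binv_uniq; rewrite (bullet_sigma_diff c c') -bulletA (bulletA _ w).
  by rewrite (bullet_ideal_l _ (HJI Jj)) wj bullet0x (binvP c).1.
rewrite (bullet_ideal_l _ (HJI Jw)).
have -> : adj (binv c) w - binv c = w + mul (binv c) w by rewrite /Defs.adj; zmod_eq.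
by apply: (subringD HJsub) => //; apply: (idealMl HJ).
Qed.

Lemma sigma_binv_congr_modJ c c' y :
  J (c' - c) -> J (sigma (binv c') y - sigma (binv c) y).
Proof. by move=> /binv_congr_modJ; apply: sigma_congr_modJ. Qed.

Section Reflection.
Variables (X : N -> Prop) (g : N -> N).
Hypothesis HX : is_YB_solution X (ybr mul S I).
Hypothesis Hg1 : forall x, X x -> forall z, I z -> mul (g x) z = mul z (g x).
Hypothesis Hg2 : forall x j, X x -> J j -> X (x + j) -> g (x + j) = g x.
Hypothesis Hg3 : forall x, X x -> J (g x).
Hypothesis Hg4 : forall x, X x -> adj (g x) (g x) = 0.
Hypothesis HkX : forall x, X x -> X (x + mul x (g x)).

Let k x := x + mul x (g x).

Lemma ybr_closed x y :
  X x -> X y -> X (sigma x y) /\ X (sigma (binv (sigma x y)) x).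
Proof. exact: HX.1. Qed.

Lemma g_central x : X x -> central_in_I (g x).
Proof. by move=> Xx; split; [apply/HJI/Hg3 | apply: Hg1]. Qed.

Lemma g_congr_modJ z w : X z -> X w -> J (w - z) -> g w = g z.
Proof. by move=> Xz Xw /(Hg2 Xz); rewrite addrC subrK; apply. Qed.

Lemma kE x : X x -> k x = sigma (g x) x.
Proof. by move=> Xx; rewrite (sigma_idealE _ (HJI (Hg3 Xx))). Qed.

Lemma k_eq_modJ x : X x -> J (k x - x).
Proof. by move=> Xx; rewrite /k addrC addKr; apply: (idealMl HJ); apply: Hg3. Qed.

Lemma g_k x : X x -> g (k x) = g x.
Proof. by move=> Xx; apply: g_congr_modJ (HkX Xx) (k_eq_modJ Xx). Qed.

Lemma kK x : X x -> k (k x) = x.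
Proof.
move=> Xx; rewrite {1}/k g_k //.
apply: (eq_from_diff (congr1 (mul x) (Hg4 Xx))); rewrite mulx0 /k.
by expand_mul; zmod_eq.
Qed.

Lemma sigma_k_binv c z (w := sigma (binv c) z) :
  X w -> sigma c (k w) = sigma (g w) z.
Proof. by move=> Xw; rewrite kE // sigma_central_conj //; apply: g_central. Qed.

Lemma k_reflection : is_reflection X (ybr mul S I) k.
Proof.
move=> x y Xx Xy; rewrite /ybr /= !tauE.
set u := sigma x y; set v := sigma (binv u) x.
set u' := sigma x (k y); set v' := sigma (binv u') x.
have [Xu Xv] := ybr_closed Xx Xy.
have [Xu' Xv'] := ybr_closed Xx (HkX Xy).
set a := sigma u (k v); set b := sigma (binv a) u.
have [_ Xb] := ybr_closed Xu (HkX Xv).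
have gy_comm := sigma_central_comm _ _ (g_central Xy).
have a_x : a = sigma (g v) x by rewrite /a sigma_k_binv.
have u'_a : sigma u' (k v') = a.
  rewrite sigma_k_binv // a_x; congr sigma; apply: g_congr_modJ => //.
  apply: sigma_binv_congr_modJ; rewrite /u' /u -sigmaB.
  exact/sigma_ideal_stable/k_eq_modJ.
have u'_gy : u' = sigma (g y) u by rewrite /u' /u kE // gy_comm.
rewrite u'_a u'_gy -gy_comm -/b kE //; congr (_, sigma _ _); symmetry.
apply: g_congr_modJ => //; rewrite -[y in b - y](sigma_binvKV x y) -/u /b.
apply: sigma_binv_congr_modJ; rewrite a_x (sigma_idealE _ (HJI (Hg3 Xv))) addrC addKr.
by apply: (idealMl HJ); apply: Hg3.
Qed.

End Reflection.
End IdealInI.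
End Brace.
End NonUnitalRing.

Theorem mainTheorem12 (N : zmodType) (mul : N -> N -> N)
  (S I X J : N -> Prop) (g : N -> N)
  (HN : is_nilpotent_ring mul)
  (HS : is_subring mul S) (HI : is_ideal mul I)
  (HSI : forall x, S x -> I x -> x = 0)
  (HSplusI : forall x, exists s i, S s /\ I i /\ x = s + i)
  (HX : is_YB_solution X (ybr mul S I))
  (HJ : is_ideal mul J) (HJIX : forall j, J j -> I j /\ X j)
  (HgX : forall x, X x -> X (g x))
  (Hg1 : forall x, X x -> forall z, I z -> mul (g x) z = mul z (g x))
  (Hg2 : forall x j, X x -> J j -> X (x + j) -> g (x + j) = g x)
  (Hg3 : forall x, X x -> J (g x))
  (Hg4 : forall x, X x -> adj mul (g x) (g x) = 0)
  (HkX : forall x, X x -> X (x + mul x (g x))) :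
  (forall x, exists! p : N * N, S p.1 /\ I p.2 /\ x = adj mul p.1 p.2) /\
  is_left_brace (bullet mul S I) /\
  is_reflection X (ybr mul S I) (fun x => x + mul x (g x)) /\
  (forall x, X x ->
     let k := fun y => y + mul y (g y) in k (k x) = x).
Proof.
case: HN => mulA mulDr mulDl nilp.
have HJI j : J j -> I j by case/HJIX.
split; first exact: decomp_exists_unique.
split; first exact: bullet_left_brace.
split.
  exact: (k_reflection mulA mulDr mulDl nilp HS HI HSI HSplusI HJ HJI HX Hg1 Hg2 Hg3 HkX).
by move=> x Xx k; exact: (kK mulA mulDr mulDl HJ Hg2 Hg3 Hg4 HkX Xx).
Qed.
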